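(* Let $A:\mathbb{R}^n\to\mathbb{R}^{n\times n}$ be symmetric-matrix valued, three times continuously differentiable at every $v\neq 0$, with $A(\alpha v)=A(v)$ for all $\alpha\in\mathbb{R}\setminus\{0\}$. Let $J(v):=\frac{\partial}{\partial v}(A(v)v)$, fix $\sigma\in\mathbb{R}$, and define, for $v$ with $J(v)-\sigma I$ nonsingular, $\psi(v):=(J(v)-\sigma I)^{-1}v$ and $\varphi(v):=\psi(v)/\|\psi(v)\|_2$. (a) Suppose $(\lambda_*,v_* )\in\mathbb{R}\times\mathbb{R}^n$ satisfies $A(v_* )v_*=\lambda_*v_*$ with $\|v_*\|_2=1$, and suppose $\sigma\neq\lambda_*$ and $J(v_* )-\sigma I$ is nonsingular. Then $\varphi(v_* )=v_*$ if $\sigma<\lambda_*$, and $\varphi(v_* )=-v_*$ if $\sigma>\lambda_*$. (b) Suppose $v_*$ is such that $J(v_* )-\sigma I$ is nonsingular and $v_*=\varphi(v_* )$ or $v_*=-\varphi(v_* )$. Then $A(v_* )v_*=\lambda_*v_*$ with $$\lambda_*:=\sigma\pm\frac{1}{\|(J(v_* )-\sigma I)^{-1}v_*\|_2}=v_*^TA(v_* )v_*,$$ where the sign $\pm$ corresponds to the case $\varphi(v_* )=\pm v_*$.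
   Context: $\|\cdot\|_2$ is the Euclidean norm; $\frac{\partial}{\partial v}$ denotes the Jacobian matrix. *)

From HB Require Import structures.
From mathcomp Require Import all_boot all_order all_algebra.
From mathcomp Require Import all_classical all_reals all_analysis.
Set Implicit Arguments. Unset Strict Implicit. Unset Printing Implicit Defensive.
Import Order.TTheory GRing.Theory Num.Theory.
Import numFieldNormedType.Exports.
Local Open Scope ring_scope.

Fixpoint iterD (R : numFieldType) (V W : normedModType R) (f : V -> W)
    (ds : seq V) : V -> W :=
  match ds with
  | [::] => f
  | d :: ds' => fun x => derive (iterD f ds') x d
  end.

(* In finite dimension (and U open) this is
   the usual C^k condition (all partial derivatives up to order k exist
   and are continuous). *)
Definition Ck_on (R : numFieldType) (V W : normedModType R) (k : nat)
    (f : V -> W) (U : V -> Prop) : Prop :=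
  forall ds : seq V, (size ds <= k)%N ->
    (forall x, U x -> {for x, continuous (iterD f ds)}) /\
    ((size ds < k)%N -> forall x d, U x -> derivable (iterD f ds) x d).

Definition norm2 (R : realType) (n : nat) (v : 'cV[R]_n) : R :=
  Num.sqrt (\sum_(i < n) v i ord0 ^+ 2).

Definition ebasis (R : realType) (n : nat) (j : 'I_n) : 'cV[R]_n :=
  delta_mx j ord0.

Definition jacobianC (R : realType) (n : nat) (g : 'cV[R]_n -> 'cV[R]_n)
    (v : 'cV[R]_n) : 'M[R]_n :=
  \matrix_(i < n, j < n) (derive g v (@ebasis R n j)) i ord0.

Definition Jmat (R : realType) (n : nat) (A : 'cV[R]_n -> 'M[R]_n)
    (v : 'cV[R]_n) : 'M[R]_n :=
  jacobianC (fun w => A w *m w) v.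

Definition psi (R : realType) (n : nat) (A : 'cV[R]_n -> 'M[R]_n) (sigma : R)
    (v : 'cV[R]_n) : 'cV[R]_n :=
  invmx (Jmat A v - sigma%:M) *m v.

Definition phi (R : realType) (n : nat) (A : 'cV[R]_n -> 'M[R]_n) (sigma : R)
    (v : 'cV[R]_n) : 'cV[R]_n :=
  (norm2 (psi A sigma v))^-1 *: psi A sigma v.

From HB Require Import structures.
From mathcomp Require Import all_boot all_order all_algebra.
From mathcomp Require Import all_classical all_reals all_analysis.
From mathcomp Require Import ring lra.
Set Implicit Arguments. Unset Strict Implicit. Unset Printing Implicit Defensive.
Import Order.TTheory GRing.Theory Num.Theory.
Import numFieldNormedType.Exports.
Local Open Scope ring_scope.
Local Open Scope classical_set_scope.

(* Since A is constant along rays, 'D_v A v = 0; as directional derivatives of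
   a C^1 map are linear in the direction, differentiating w |-> A(w) w yields
   Euler's identity J(v) v = A(v) v.  So v is an eigenvector of A(v) exactly
   when it is one of J(v), hence of (J(v) - sigma I)^-1, with eigenvalue
   1/(lambda - sigma).  Normalizing psi(v) then gives sign(lambda - sigma) v,
   and conversely phi(v) = +-v forces (J(v) - sigma I) v = +-v / ||psi(v)||. *)

Section DirectionalDerivative.
Context {R : realType} {V : normedModType R}.

Lemma derive_near_quotient (W : normedModType R) (f : V -> W) x d L :
  (\forall h \near 0^', h^-1 *: (f (h *: d + x) - f x) = L) ->
  derivable f x d /\ 'D_d f x = L.
Proof.
move=> EL.
have qL : (fun h : R => h^-1 *: ((f \o shift x) (h *: d) - f x)) @ 0^' --> L.
  have EL' : {near 0^', (fun _ : R => L) =1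
      (fun h : R => h^-1 *: ((f \o shift x) (h *: d) - f x))}.
    by apply: filterS EL => h /= ->.
  exact: cvg_trans (near_eq_cvg EL') (cvg_cst L).
by split; [exact: (cvgP L qL) | exact: cvg_lim].
Qed.

Lemma derive_homogeneous0 (W : normedModType R) (f : V -> W) x :
  (forall (a : R) y, a != 0 -> f (a *: y) = f y) -> 'D_x f x = 0.
Proof.
move=> hom.
suff /derive_near_quotient[] : \forall h \near 0^', h^-1 *: (f (h *: x + x) - f x) = 0
  by [].
near=> h.
have h1 : h + 1 != 0.
  have hlt : `|h| < 1 by near: h; apply: dnbhs0_lt.
  apply: contraTneq hlt => /eqP; rewrite addr_eq0 => /eqP->.
  by rewrite normrN normr1 ltxx.
by rewrite -[X in h *: x + X]scale1r -scalerDl hom // subrr scaler0.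
Unshelve. all: by end_near.
Qed.

Lemma is_derive_along_line (W : normedModType R) (f : V -> W) b w t :
  derivable f (t *: b + w) b ->
  is_derive t (1 : R) (fun s => f (s *: b + w)) ('D_b f (t *: b + w)).
Proof.
have E : (fun h : R => h^-1 *: (((fun s => f (s *: b + w)) \o shift t) (h *: 1)
            - f (t *: b + w))) =
         (fun h : R => h^-1 *: ((f \o shift (t *: b + w)) (h *: b) - f (t *: b + w))).
  by apply/funext => h /=; rewrite scaler1 scalerDl addrA.
by move=> db; apply: DeriveDef; rewrite /derivable /derive ?E.
Qed.

Lemma MVT_centered (g dg : R -> R) (k : R) :
  (forall t, `|t| <= `|k| -> is_derive t (1 : R) g (dg t)) ->
  exists2 c, `|c| <= `|k| & g k - g 0 = dg c * k.
Proof.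
move=> gdg.
have cont a b : `|a| <= `|k| -> `|b| <= `|k| -> {within `[a, b], continuous g}.
  move=> ha hb; apply: derivable_within_continuous => t.
  rewrite in_itv /= => /andP[t1 t2]; have /gdg[] // : `|t| <= `|k|.
  by move: ha hb; rewrite !ler_norml => /andP[? ?] /andP[? ?]; apply/andP; split; lra.
have inside a b t : `|a| <= `|k| -> `|b| <= `|k| -> a <= t <= b -> `|t| <= `|k|.
  by rewrite !ler_norml => /andP[? ?] /andP[? ?] /andP[? ?]; apply/andP; split; lra.
have k0 : `|0 : R| <= `|k| by rewrite normr0.
case: (leP 0 k) => [k_ge0 | k_lt0].
- have [c cin E] := @MVT_segment R g dg 0 k k_ge0
    (fun t tin => gdg t (inside _ _ t k0 (lexx _) (subset_itv_oo_cc tin)))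
    (cont _ _ k0 (lexx _)).
  by exists c; [exact: inside _ _ c k0 (lexx _) cin | rewrite E subr0].
- have [c cin E] := @MVT_segment R g dg k 0 (ltW k_lt0)
    (fun t tin => gdg t (inside _ _ t (lexx _) k0 (subset_itv_oo_cc tin)))
    (cont _ _ (lexx _) k0).
  exists c; first exact: inside _ _ c (lexx _) k0 cin.
  by apply/eqP; rewrite -opprB E sub0r mulrN opprK.
Qed.

Lemma increment_along_le (f : V -> R) (w b : V) (s L eps : R) :
  (forall t, `|t| <= `|s| ->
     derivable f (t *: b + w) b /\ `|L - 'D_b f (t *: b + w)| <= eps) ->
  `|f (s *: b + w) - f w - s * L| <= eps * `|s|.
Proof.
move=> near_L.
have [|c cs] := @MVT_centered (fun t => f (t *: b + w))
  (fun t => 'D_b f (t *: b + w)) s.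
  by move=> t ts; apply: is_derive_along_line; exact: (near_L t ts).1.
rewrite /= scale0r add0r => ->.
by rewrite [s * L]mulrC -mulrBl normrM ler_wpM2r // distrC; exact: (near_L c cs).2.
Qed.

Lemma deriveD_dir (f : V -> R) x a b c :
  (\forall y \near x, derivable f y b) -> {for x, continuous ('D_b f)} ->
  derivable f x a ->
  'D_(a + c *: b) f x = 'D_a f x + c * 'D_b f x.
Proof.
(* Split the increment at h a + x: by the mean value theorem along b, the
   second part is h c times a value of 'D_b f near x, close to 'D_b f x. *)
move=> db cb da; apply: cvg_lim; first exact: norm_hausdorff.
set q1 := fun h : R => h^-1 * (f ((h * c) *: b + (h *: a + x)) - f (h *: a + x)).
set q2 := fun h : R => h^-1 *: ((f \o shift x) (h *: a) - f x).
suff q12 : (q2 + q1) @ 0^' --> 'D_a f x + c * 'D_b f x.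
  apply: cvg_trans q12; apply: near_eq_cvg; near=> h.
  rewrite -[(q2 + q1) h]/(q2 h + q1 h) /q1 /q2 /= -[h^-1 * _]/(h^-1 *: _).
  rewrite -scalerDr addrC addrA subrK.
  by congr (_ *: (f _ - _)); rewrite scalerDr scalerA addrCA addrA.
apply: cvgD => //; apply/cvgrPdist_le => e e0.
set eps := e / (`|c| + 1).
have eps0 : 0 < eps by rewrite divr_gt0 // ltr_pwDr.
have : \forall y \near x, derivable f y b /\ `|'D_b f x - 'D_b f y| <= eps.
  by near=> y; split; near: y; [exact: db | exact: (cvgrPdist_le _ _).1 cb _ eps0].
move=> /nbhs_normP[r /= r0 near_x].
have r'0 : 0 < r / (`|c| * `|b| + `|a| + 1).
  by rewrite divr_gt0 // ltr_pwDr // addr_ge0 // mulr_ge0.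
near=> h.
have h0 : h != 0 by near: h; exact: nbhs_dnbhs_neq.
have hr : `|h| < r / (`|c| * `|b| + `|a| + 1) by near: h; apply: dnbhs0_lt.
have bound : `|f ((h * c) *: b + (h *: a + x)) - f (h *: a + x) - h * c * 'D_b f x|
    <= eps * `|h * c|.
  apply: increment_along_le => t ht; apply: near_x.
  rewrite /ball_ /= addrA opprD addrCA subrr addr0 normrN.
  apply: le_lt_trans (ler_normD _ _) _; rewrite !normrZ.
  have : `|t| * `|b| <= `|h| * `|c| * `|b| by rewrite ler_wpM2r // -normrM.
  have : `|h| * (`|c| * `|b| + `|a| + 1) < r.
    by rewrite -ltr_pdivlMr // ltr_pwDr // addr_ge0 // mulr_ge0.
  have := normr_ge0 h; have := normr_ge0 a; have := normr_ge0 t; nra.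
have -> : c * 'D_b f x - q1 h = - (h^-1 *
    (f ((h * c) *: b + (h *: a + x)) - f (h *: a + x) - h * c * 'D_b f x)).
  by rewrite /q1; field.
rewrite normrN normrM normfV ler_pdivrMl ?normr_gt0 //; apply: le_trans bound _.
rewrite normrM mulrCA ler_wpM2l // /eps mulrAC ler_pdivrMr ?ltr_pwDr //.
have := normr_ge0 c; nra.
Unshelve. all: by end_near.
Qed.

Lemma derive_sum_dir (f : V -> R) x k (e : 'I_k -> V) (cs : 'I_k -> R) :
  (forall d, \forall y \near x, derivable f y d) ->
  (forall d, {for x, continuous ('D_d f)}) ->
  'D_(\sum_(j < k) cs j *: e j) f x = \sum_(j < k) cs j * 'D_(e j) f x.
Proof.
move=> db cb; elim: k e cs => [|k IH] e cs; first by rewrite !big_ord0 derive0.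
rewrite !big_ord_recr /= deriveD_dir ?IH //; exact: nbhs_singleton (db _).
Qed.

End DirectionalDerivative.

Section MatrixDerivative.
Context {R : realType} {V : normedModType R}.

Lemma derive_mulmx {m n p} (F : V -> 'M[R]_(m, n)) (G : V -> 'M[R]_(n, p)) x d :
  derivable F x d -> derivable G x d ->
  derivable (fun y => F y *m G y) x d /\
  'D_d (fun y => F y *m G y) x = F x *m 'D_d G x + 'D_d F x *m G x.
Proof.
move=> /derivable_mxP dF /derivable_mxP dG.
have entryE i j : (fun y => (F y *m G y) i j) =
    \sum_(l < n) ((fun y => F y i l) * (fun y => G y l j)).
  by apply/funext => y; rewrite fct_sumE mxE.
have dFG : derivable (fun y => F y *m G y) x d.
  apply/derivable_mxP => i j; rewrite entryE.
  by apply: derivable_sum => l; apply: derivableM.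
split=> //; apply/matrixP => i j.
rewrite derive_mx // (derive_mx ((derivable_mxP _ _ _).2 dF))
  (derive_mx ((derivable_mxP _ _ _).2 dG)) !mxE entryE derive_sum; last first.
  by move=> l; apply: derivableM.
rewrite -big_split; apply: eq_bigr => l _ /=.
rewrite deriveM; [|exact: dF|exact: dG].
by rewrite !mxE [G x l j *: _]mulrC.
Qed.

Lemma derive_sum_dir_mx {m p} (M : V -> 'M[R]_(m, p)) x k (e : 'I_k -> V)
    (cs : 'I_k -> R) :
  (forall d, \forall y \near x, derivable M y d) ->
  (forall d, {for x, continuous ('D_d M)}) ->
  'D_(\sum_(j < k) cs j *: e j) M x = \sum_(j < k) cs j *: 'D_(e j) M x.
Proof.
move=> dM cM; apply/matrixP => i l.
have entry_derivable d : \forall y \near x, derivable (fun y => M y i l) y d.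
  by apply: filterS (dM d) => y /derivable_mxP.
have entry_derive d : {near x, (fun y => ('D_d M y) i l) =1 'D_d (fun y => M y i l)}.
  by apply: filterS (dM d) => y dMy; rewrite derive_mx // mxE.
have entry_cont d : {for x, continuous ('D_d (fun y => M y i l))}.
  rewrite /prop_for /continuous_at -(nbhs_singleton (entry_derive d)).
  apply: cvg_trans (near_eq_cvg (entry_derive d)) _.
  exact: continuous_comp (cM d) (@coord_continuous _ m p i l _).
rewrite (nbhs_singleton (entry_derive _)) derive_sum_dir // summxE.
by apply: eq_bigr => j _; rewrite mxE (nbhs_singleton (entry_derive _)).
Qed.

End MatrixDerivative.

Lemma Ck_on_derivable (R : numFieldType) (V W : normedModType R) k
    (f : V -> W) (U : V -> Prop) x d :
  (0 < k)%N -> Ck_on k f U -> U x -> derivable f x d.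
Proof. by move=> k0 Ck Ux; exact: (Ck [::] isT).2 k0 x d Ux. Qed.

Lemma Ck_on_continuous_derive (R : numFieldType) (V W : normedModType R) k
    (f : V -> W) (U : V -> Prop) x d :
  (0 < k)%N -> Ck_on k f U -> U x -> {for x, continuous ('D_d f)}.
Proof. by move=> k0 Ck Ux; exact: (Ck [:: d] k0).1 x Ux. Qed.

Section Jacobian.
Context {R : realType} {n : nat}.

Lemma sum_ebasis (v : 'cV[R]_n) : \sum_(j < n) v j ord0 *: ebasis R j = v.
Proof.
by rewrite [RHS]matrix_sum_delta; apply: eq_bigr => j _; rewrite big_ord1.
Qed.

Lemma jacobianC_mul (g : 'cV[R]_n -> 'cV[R]_n) v d :
  jacobianC g v *m d = \sum_(j < n) d j ord0 *: 'D_(ebasis R j) g v.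
Proof.
apply/matrixP => i k; rewrite (ord1 k) !mxE summxE.
by apply: eq_bigr => j _; rewrite !mxE mulrC.
Qed.

Lemma Jmat_mul_self (A : 'cV[R]_n -> 'M[R]_n) k v :
  (0 < k)%N -> Ck_on k A (fun w => w != 0) ->
  (forall (a : R) w, a != 0 -> A (a *: w) = A w) ->
  v != 0 -> Jmat A v *m v = A v *m v.
Proof.
move=> k0 Ck hom v0.
have near_v : \forall y \near v, y != 0.
  apply/nbhs_normP; exists `|v|; first by rewrite /= normr_gt0.
  by move=> y /=; apply: contraTneq => ->; rewrite subr0 ltxx.
have dA y d : y != 0 -> derivable A y d by exact: Ck_on_derivable k0 Ck.
rewrite /Jmat jacobianC_mul.
have product_rule d : 'D_d (fun w => A w *m w) v = A v *m d + 'D_d A v *m v.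
  have [_ ->] := @derive_mulmx _ _ _ _ _ A id v d (dA v d v0)
    (@derivable_id _ _ v d).
  by rewrite derive_id.
under eq_bigr => j _ do rewrite product_rule.
rewrite (eq_bigr (fun j => A v *m (v j ord0 *: ebasis R j) +
                           (v j ord0 *: 'D_(ebasis R j) A v) *m v)); last first.
  by move=> j _; rewrite scalerDr scalemxAr scalemxAl.
rewrite big_split /= -mulmx_sumr -mulmx_suml sum_ebasis.
rewrite -derive_sum_dir_mx ?sum_ebasis ?derive_homogeneous0 ?mul0mx ?addr0 //.
- by move=> d; apply: filterS near_v => y; exact: dA.
- by move=> d; exact: Ck_on_continuous_derive k0 Ck v0.
Qed.

End Jacobian.

Section ShiftInvert.
Context {R : realType} {n : nat}.
Implicit Types (M J : 'M[R]_n) (v p : 'cV[R]_n).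

Lemma norm2Z (c : R) v : norm2 (c *: v) = `|c| * norm2 v.
Proof.
rewrite /norm2; under eq_bigr do rewrite mxE exprMn.
by rewrite -mulr_sumr sqrtrM ?sqr_ge0 // sqrtr_sqr.
Qed.

Lemma norm2_eq0 v : (norm2 v == 0) = (v == 0).
Proof.
apply/idP/idP => [|/eqP->]; last first.
  by rewrite -(scale0r (0 : 'cV[R]_n)) norm2Z normr0 mul0r.
rewrite sqrtr_eq0 => sum_le0.
have /psumr_eq0P sq0 : \sum_(i < n) v i ord0 ^+ 2 = 0.
  by apply/eqP; rewrite eq_le sum_le0 sumr_ge0 // => i _; exact: sqr_ge0.
apply/eqP/matrixP => i j; rewrite (ord1 j) mxE.
by apply/eqP; rewrite -sqrf_eq0 sq0 // => k _; exact: sqr_ge0.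
Qed.

Lemma norm2_normalize p : p != 0 -> norm2 ((norm2 p)^-1 *: p) = 1.
Proof.
rewrite -norm2_eq0 => p0.
by rewrite norm2Z ger0_norm ?invr_ge0 ?sqrtr_ge0 // mulVf.
Qed.

Lemma normalize_scale (c : R) v :
  norm2 v = 1 -> (norm2 (c *: v))^-1 *: (c *: v) = Num.sg c *: v.
Proof.
move=> v1; rewrite norm2Z v1 mulr1 scalerA; congr (_ *: _).
have [->|c0] := eqVneq c 0; first by rewrite mulr0 sgr0.
by rewrite [X in _ * X]numEsg mulrCA mulVf ?mulr1 ?normr_eq0.
Qed.

Lemma rayleigh_eigen M (lam : R) v :
  M *m v = lam *: v -> norm2 v = 1 -> (v^T *m M *m v) ord0 ord0 = lam.
Proof.
move=> Mv v1; rewrite -mulmxA Mv -scalemxAr mxE.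
have -> : (v^T *m v) ord0 ord0 = norm2 v ^+ 2.
  rewrite mxE sqr_sqrtr ?sumr_ge0 // => [|i _]; last exact: sqr_ge0.
  by apply: eq_bigr => i _; rewrite mxE expr2.
by rewrite v1 expr1n mulr1.
Qed.

Lemma invmx_eigen M (c : R) v :
  M \in unitmx -> M *m v = c *: v -> invmx M *m v = c^-1 *: v.
Proof.
move=> U Mv; have vE : v = c *: (invmx M *m v) by rewrite scalemxAr -Mv mulKmx.
have [c0|c0] := eqVneq c 0; first by rewrite vE c0 !scale0r mulmx0 scaler0.
by rewrite [in RHS]vE scalerA mulVf ?scale1r.
Qed.

Lemma shift_invert_eigen J (sigma lam : R) v :
  J - sigma%:M \in unitmx -> J *m v = lam *: v -> norm2 v = 1 ->
  (norm2 (invmx (J - sigma%:M) *m v))^-1 *: (invmx (J - sigma%:M) *m v)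
    = Num.sg (lam - sigma) *: v.
Proof.
move=> U Jv v1.
have shifted : (J - sigma%:M) *m v = (lam - sigma) *: v.
  by rewrite mulmxBl Jv mul_scalar_mx scalerBl.
by rewrite (invmx_eigen U shifted) normalize_scale // sgrV.
Qed.

Lemma eigen_of_shift_invert J (sigma e : R) v :
  J - sigma%:M \in unitmx -> v != 0 -> `|e| = 1 ->
  let p := invmx (J - sigma%:M) *m v in
  (norm2 p)^-1 *: p = e *: v ->
  norm2 v = 1 /\ J *m v = (sigma + e / norm2 p) *: v.
Proof.
move=> U v0 e1 p pv.
have p0 : p != 0 by apply: contraNneq v0 => p0; rewrite -(mulKVmx U v) -/p p0 mulmx0.
have Np0 : norm2 p != 0 by rewrite norm2_eq0.
have ee : e * e = 1 by rewrite -expr2 -real_normK ?num_real // e1 expr1n.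
split.
  by rewrite -(mul1r (norm2 v)) -e1 -norm2Z -pv norm2_normalize.
have : invmx (J - sigma%:M) *m v = (norm2 p * e) *: v.
  by rewrite -/p -scalerA -pv scalerA mulfV // scale1r.
move=> /invmx_eigen; rewrite unitmx_inv invmxK => /(_ U).
rewrite mulmxBl mul_scalar_mx => /eqP; rewrite subr_eq => /eqP->.
have e0 : e != 0 by rewrite -normr_eq0 e1 oner_neq0.
have einv : e^-1 = e by rewrite -[e^-1]mul1r -ee mulfK.
by rewrite -scalerDl addrC invfM einv mulrC.
Qed.

End ShiftInvert.

Local Close Scope classical_set_scope.

Theorem proposition2 (R : realType) (n : nat) (A : 'cV[R]_n -> 'M[R]_n)
    (sigma : R) :
  (forall v, (A v)^T = A v) ->
  Ck_on 3 A (fun v => v != 0) ->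
  (forall (alpha : R) v, alpha != 0 -> A (alpha *: v) = A v) ->
  (* (a) *)
  (forall (lam : R) (vs : 'cV[R]_n),
      A vs *m vs = lam *: vs -> norm2 vs = 1 -> sigma != lam ->
      Jmat A vs - sigma%:M \in unitmx ->
      (sigma < lam -> phi A sigma vs = vs) /\
      (lam < sigma -> phi A sigma vs = - vs))
  /\
  (* (b) *)
  (forall vs : 'cV[R]_n,
      vs != 0 -> Jmat A vs - sigma%:M \in unitmx ->
      (phi A sigma vs = vs ->
         let lam := sigma + (norm2 (invmx (Jmat A vs - sigma%:M) *m vs))^-1 in
         A vs *m vs = lam *: vs /\ lam = (vs^T *m A vs *m vs) ord0 ord0) /\
      (phi A sigma vs = - vs ->
         let lam := sigma - (norm2 (invmx (Jmat A vs - sigma%:M) *m vs))^-1 in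
         A vs *m vs = lam *: vs /\ lam = (vs^T *m A vs *m vs) ord0 ord0)).
Proof.
move=> _ Ck hom; have JvAv := Jmat_mul_self (isT : (0 < 3)%N) Ck hom.
split=> [lam vs Av v1 _ U | vs v0 U].
  have v0 : vs != 0 by rewrite -norm2_eq0 v1 oner_neq0.
  rewrite /phi /psi (shift_invert_eigen (lam := lam) U _ v1); last by rewrite JvAv.
  by split=> ?; [rewrite gtr0_sg ?subr_gt0 ?scale1r|rewrite ltr0_sg ?subr_lt0 ?scaleN1r].
have sign_case e : `|e| = 1 -> phi A sigma vs = e *: vs ->
    let lam := sigma + e / norm2 (invmx (Jmat A vs - sigma%:M) *m vs) in
    A vs *m vs = lam *: vs /\ lam = (vs^T *m A vs *m vs) ord0 ord0.
  move=> e1 /(eigen_of_shift_invert U v0 e1)[v1 Jv] lam.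
  have Av : A vs *m vs = lam *: vs by rewrite -JvAv.
  by rewrite (rayleigh_eigen Av v1).
split; [have := sign_case 1 | have := sign_case (-1)];
  by rewrite ?normrN normr1 ?scale1r ?scaleN1r ?mul1r ?mulN1r => /(_ erefl).
Qed.
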